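(* Let $G=T_1^{r_1}\times\cdots\times T_m^{r_m}$, where $T_1,\dots,T_m$ are pairwise non-isomorphic non-abelian finite simple groups and $r_1,\dots,r_m$ are positive integers. Then \[ \gamma^{\mathrm{ss}}_{\mathrm{cp}}(G)\le\max\{\gamma^{\mathrm{ss}}_{\mathrm{cp}}(T_1),\dots,\gamma^{\mathrm{ss}}_{\mathrm{cp}}(T_m)\}. \]
   Context: A factorization $G=A_1\cdots A_k$ (setwise) of a finite group $G$ with each $A_i$ conjugate in $G$ to $A\le G$ is a special solvable cp-factorization if (i) $A$ is solvable, (ii) $N_G(A)=A$, and (iii) for every $\alpha\in\mathrm{Aut}(G)$ there is $g\in G$ with $A^\alpha=A^g$. $\gamma^{\mathrm{ss}}_{\mathrm{cp}}(G)$ is the minimal length of a special solvable cp-factorization of $G$. *)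

From mathcomp Require Import all_boot all_fingroup all_solvable.
Set Implicit Arguments. Unset Strict Implicit. Unset Printing Implicit Defensive.
Import GroupScope.

Definition has_sscp_fact (gT : finGroupType) (G : {group gT}) (k : nat) : Prop :=
  exists A : {group gT},
    [/\ A \subset G, solvable A, 'N_G(A) = A,
        (forall a, a \in Aut G -> exists2 g, g \in G & a @: A = A :^ g)
      & exists g : 'I_k -> gT,
          (forall i, g i \in G) /\ G :=: \prod_(i < k) (A :^ g i)].

Definition is_gamma_sscp (gT : finGroupType) (G : {group gT}) (n : nat) : Prop :=
  has_sscp_fact G n /\ (forall k, has_sscp_fact G k -> n <= k).

From mathcomp Require Import all_boot all_fingroup all_solvable.
From Stdlib Require Import ClassicalEpsilon.
Set Implicit Arguments. Unset Strict Implicit. Unset Printing Implicit Defensive.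
Import GroupScope.

(* Pad the factorizations of all T_i to the common length M = max gam_i, and
   transport a special solvable subgroup B_i of T_i to every factor of type T_i
   along one fixed isomorphism per factor; let A be the product of these copies.
   A is solvable; it is self-normalizing, because an element of G normalizing A
   normalizes each copy (the copy in N_x is A :&: N_x) through its N_x-component;
   and G = A^g_1 ... A^g_M, where g_k collects the images of the k-th conjugators.
   An automorphism of G permutes the non-abelian simple factors, and only within
   an isomorphism type, so it maps each copy to a conjugate of the copy in the
   image factor; the product of these conjugators conjugates A to its image. *)

Lemma exists_minimal (P : nat -> Prop) k :
  P k -> exists2 n, P n /\ (forall j, P j -> n <= j) & n <= k.
Proof.
move=> Pk; pose p n := if excluded_middle_informative (P n) then true else false.
have pP n : reflect (P n) (p n).
  by rewrite /p; case: excluded_middle_informative; constructor.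
have exp : exists n, p n by exists k; apply/pP.
case: (ex_minnP exp) => n /pP Pn min_n.
by exists n; [split=> // j /pP /min_n | apply/min_n/pP].
Qed.

Definition aut_conj_stable (gT : finGroupType) (G B : {set gT}) :=
  forall a, a \in Aut G -> exists2 g, g \in G & a @: B = B :^ g.

Definition special_solvable (gT : finGroupType) (G A : {group gT}) :=
  [/\ A \subset G, solvable A, 'N_G(A) = A & aut_conj_stable G A].

Definition conj_factorization (gT : finGroupType) (G A : {group gT}) k (g : 'I_k -> gT) :=
  (forall i, g i \in G) /\ G :=: \prod_(i < k) A :^ g i.

Lemma has_sscp_factP (gT : finGroupType) (G : {group gT}) k :
  has_sscp_fact G k <->
  exists2 A, special_solvable G A & exists g : 'I_k -> gT, conj_factorization G A g.
Proof.
by split=> [[A [sAG solA nA autA factA]] | [A [sAG solA nA autA] factA]]; exists A.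
Qed.

Lemma has_sscp_fact_leq (gT : finGroupType) (G : {group gT}) k n :
  k <= n -> has_sscp_fact G k -> has_sscp_fact G n.
Proof.
move/subnKC <-; set d := n - k.
case=> A [sAG solA nA autA [g [gG defG]]].
(* The extra factors are copies of A :^ 1, absorbed by G since A \subset G. *)
pose g' (i : 'I_(k + d)) := if split i is inl j then g j else 1.
exists A; split=> //; exists g'; split=> [i|].
  by rewrite /g'; case: split.
have sPG : \prod_(j < d) A :^ 1 \subset G.
  elim: d {g'} => [|d IH]; first by rewrite big_ord0 sub1G.
  by rewrite big_ord_recr /= mul_subG // conjsg1.
have P1 : 1 \in \prod_(j < d) A :^ 1.
  by apply/prodsgP; exists (fun _ => 1) => [j _|]; rewrite ?group1 ?big1.
have g'_l j : g' (lshift d j) = g j.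
  by rewrite /g' -[lshift d j]/(unsplit (inl j)) unsplitK.
have g'_r j : g' (rshift k j) = 1.
  by rewrite /g' -[rshift k j]/(unsplit (inr j)) unsplitK.
rewrite big_split_ord /= (eq_bigr _ (fun j _ => congr1 _ (g'_l j))).
rewrite (eq_bigr _ (fun j _ => congr1 _ (g'_r j))).
by rewrite -defG; apply/eqP; rewrite eqEsubset mulg_subl // mul_subG.
Qed.

Lemma morphim_bigprod (aT rT : finGroupType) (D : {group aT}) (f : {morphism D >-> rT})
    (I : Type) (r : seq I) (A : I -> {set aT}) :
  (forall i, A i \subset D) -> f @* (\prod_(i <- r) A i) = \prod_(i <- r) f @* A i.
Proof.
move=> sAD; elim: r => [|i r IHr]; first by rewrite !big_nil morphim1.
by rewrite !big_cons morphimMl ?IHr.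
Qed.

Lemma cprod_sol (gT : finGroupType) (A B : {set gT}) (G : {group gT}) :
  A \* B = G -> solvable A -> solvable B -> solvable G.
Proof.
case/cprodP=> [[H K -> ->] defG cHK] solH solK.
have [nHG _] : H <| G /\ K <| G by apply: cprod_normal2; rewrite cprodE.
by rewrite (series_sol nHG) solH -defG quotientMidl quotient_sol.
Qed.

Lemma bigcprod_sol (gT : finGroupType) (I : Type) (r : seq I) (P : pred I)
    (F : I -> {set gT}) (G : {group gT}) :
    \big[cprod/1]_(i <- r | P i) F i = G -> (forall i, P i -> solvable (F i)) ->
  solvable G.
Proof.
move=> + solF; elim: r G => [|i r IHr] G; first by rewrite big_nil => <-; apply: solvable1.
rewrite big_cons; case: ifP => [Pi | _]; last exact: IHr.
move=> defG; have [[_ H _ defH] _ _] := cprodP defG.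
by apply: cprod_sol defG (solF i Pi) _; rewrite defH; apply: IHr; rewrite -defH.
Qed.

Lemma simple_normal_eq (gT : finGroupType) (G H K : {group gT}) :
    simple H -> simple K -> H <| G -> K <| G -> ~~ (H \subset 'C(K)) ->
  H :=: K.
Proof.
move=> /simpleP[_ simH] /simpleP[_ simK] nHG nKG not_cHK.
have [[sHG _] [sKG _]] := (andP nHG, andP nKG).
have ntHK : H :&: K != 1.
  apply: contraNneq not_cHK => tiHK; apply/commG1P/trivgP; rewrite -tiHK.
  by apply: commg_subI; rewrite subsetI subxx ?(subset_trans sHG (normal_norm nKG))
    ?(subset_trans sKG (normal_norm nHG)).
have [tiHK | HK_H] := simH _ (normalGI sHG nKG); first by rewrite tiHK eqxx in ntHK.
have [tiKH | KH_K] := simK _ (normalGI sKG nHG).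
  by rewrite setIC tiKH eqxx in ntHK.
by rewrite -HK_H /= setIC KH_K.
Qed.

Lemma morphim_aut_conj_stable (rT gT : finGroupType) (T B : {group rT}) (D : {group gT})
    (phi1 phi2 : {morphism T >-> gT}) (f : {morphism D >-> gT}) :
    B \subset T -> aut_conj_stable T B -> 'injm phi1 -> 'injm phi2 -> 'injm f ->
    phi1 @* T \subset D -> f @* (phi1 @* T) = phi2 @* T ->
  exists2 h, h \in phi2 @* T & f @* (phi1 @* B) = phi2 @* B :^ h.
Proof.
move=> sBT stabB inj1 inj2 injf sTD fT.
have sT_pre : T \subset (f \o phi1) @*^-1 (phi2 @* T).
  by rewrite morphpre_comp -!sub_morphim_pre ?fT.
pose beta := restrm sT_pre (invm inj2 \o (f \o phi1)).
have inj_beta : 'injm beta by rewrite injm_restrm ?injm_comp ?injm_invm.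
have im_beta : beta @* T = T.
  by rewrite morphim_restrm setIid !morphim_comp fT morphim_invm.
have [t Tt betaB] := stabB _ (Aut_aut inj_beta im_beta).
rewrite imset_autE // morphim_restrm (setIidPr sBT) !morphim_comp in betaB.
exists (phi2 t); first exact: mem_morphim.
rewrite -morphimJ // -betaB morphim_invmE morphpreK //.
by rewrite -fT !morphimS.
Qed.

Section BigDprod.

Variables (gT : finGroupType) (I : finType) (N : I -> {group gT}) (G : {group gT}).
Hypothesis defG : \big[dprod/1]_i N i = G.

Lemma bigdprod_cent i j : i != j -> N i \subset 'C(N j).
Proof.
have /bigcprodYP cNN : \big[cprod/1]_i N i == (\prod_i N i)%G.
  by rewrite (bigdprodWcp defG) bigprodGE (bigcprodWY (bigdprodWcp defG)).
by move=> neq_ij; apply: cNN.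
Qed.

Lemma bigdprod_sub i : N i \subset G.
Proof. by rewrite -(bigdprodWY defG) sub_gen // (bigcup_max i). Qed.

Lemma bigdprod_normal i : N i <| G.
Proof. by move: defG; rewrite (bigD1 i) //= => /dprod_normal2 []. Qed.

Lemma bigdprod_TI i j : i != j -> N i :&: N j = 1.
Proof.
move=> neq_ij; move: defG; rewrite (bigD1 i) //= => /dprodP[[_ H _ defH] _ _ tiN].
apply/trivgP; rewrite -tiN setIS // defH -(bigdprodWY defH) sub_gen // (bigcup_max j) //.
by rewrite eq_sym.
Qed.

Lemma bigdprod_prod_inj (e e' : I -> gT) :
    (forall i, e i \in N i) -> (forall i, e' i \in N i) ->
  \prod_i e i = \prod_i e' i -> e =1 e'.
Proof.
move=> Ne Ne' eq_e i.
have Ge : \prod_i e i \in G by rewrite -(bigdprodW defG) mem_prodg.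
have [c [_ _ uniq_c]] := mem_bigdprod defG Ge.
by rewrite (uniq_c e) // (uniq_c e') // -eq_e.
Qed.

Lemma bigdprod_prodM (e e' : I -> gT) :
    (forall i, e i \in N i) -> (forall i, e' i \in N i) ->
  \prod_i (e i * e' i) = \prod_i e i * \prod_i e' i.
Proof.
move=> Ne Ne'; elim: (index_enum I) (index_enum_uniq I) => [|i r IHr].
  by rewrite !big_nil mulg1.
move=> /andP[r'i uniq_r]; rewrite !big_cons IHr // -!mulgA; congr (_ * _).
rewrite !mulgA; congr (_ * _); rewrite big_seq; apply: commute_prod => j rj.
by apply: (centsP (bigdprod_cent _)) (Ne' i) _ (Ne j); apply: contraNneq r'i => ->.
Qed.

Lemma bigdprod_prod_exchange n (v : I -> 'I_n -> gT) :
    (forall i k, v i k \in N i) ->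
  \prod_i \prod_(k < n) v i k = \prod_(k < n) \prod_i v i k.
Proof.
move=> Nv; elim: n v Nv => [|n IHn] v Nv.
  by rewrite big_ord0 big1 // => i _; rewrite big_ord0.
rewrite big_ord_recr /= -(IHn (fun i k => v i (widen_ord (leqnSn n) k))) //.
rewrite -bigdprod_prodM // => [|i]; last exact: group_prod.
by apply: eq_bigr => i _; rewrite big_ord_recr.
Qed.

Lemma bigdprod_conj (e : I -> gT) i w : (forall j, e j \in N j) -> w \in N i ->
  w ^ (\prod_j e j) = w ^ e i.
Proof.
move=> Ne Nw; set c := fun j => if j == i then 1 else e j.
have Nc j : c j \in N j by rewrite /c; case: eqP => _; rewrite ?group1.
have cNc : \prod_j c j \in 'C(N i).
  apply: group_prod => j _; rewrite /c; case: eqVneq => [_|neq_ji]; first exact: group1.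
  by apply: (subsetP (bigdprod_cent neq_ji)); apply: Ne.
have -> : \prod_j e j = \prod_j (if j == i then e i else 1) * \prod_j c j.
  rewrite -bigdprod_prodM //; last by move=> j; case: eqP => [->|]; rewrite ?group1.
  by apply: eq_bigr => j _; rewrite /c; case: eqP => [->|]; rewrite ?mulg1 ?mul1g.
rewrite -big_mkcond big_pred1_eq conjgM.
apply/conjg_fixP/commgP/commute_sym.
by apply: (centP cNc); rewrite groupJ.
Qed.

Lemma bigdprod_morphim_simple_factor (f : {morphism G >-> gT}) i :
    'injm f -> f @* G = G -> (forall j, simple (N j)) -> ~~ abelian (N i) ->
  exists j, f @* N i = N j.
Proof.
move=> injf imfG simN nabNi.
have isoNi : N i \isog f @* N i := sub_isog (bigdprod_sub i) injf.
have nKG : f @* N i <| G.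
  by rewrite -[X in _ <| X]imfG morphim_normal ?bigdprod_normal.
have simK : simple (f @* N i) by rewrite -(isog_simple isoNi).
have [j not_cKNj | cKN] := pickP (fun j => ~~ (f @* N i \subset 'C(N j))).
  by exists j; apply: simple_normal_eq simK (simN j) nKG (bigdprod_normal j) not_cKNj.
have cGK : <<\bigcup_j N j>> \subset 'C(f @* N i).
  by rewrite gen_subG; apply/bigcupsP=> j _; rewrite centsC; apply/negbFE/cKN.
rewrite (bigdprodWY defG) in cGK.
by case/negP: nabNi; rewrite (isog_abelian isoNi); apply: subset_trans (normal_sub nKG) cGK.
Qed.

Section SubProduct.

Variable B : I -> {group gT}.
Hypothesis sBN : forall i, B i \subset N i.

Lemma bigprod_sub_cprod : \big[cprod/1]_i B i = (\prod_i B i)%G.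
Proof.
apply/eqP/bigcprodYP=> i j _ _ neq_ij.
by rewrite (subset_trans (sBN i)) // (subset_trans (bigdprod_cent neq_ij)) ?centS.
Qed.

Let defA : (\prod_i B i)%G = \prod_i B i :> {set gT}.
Proof. exact/esym/bigcprodW/bigprod_sub_cprod. Qed.

Lemma bigprod_sub_subG : (\prod_i B i)%G \subset G.
Proof.
rewrite bigprodGE gen_subG; apply/bigcupsP=> i _.
by rewrite (subset_trans (sBN i)) ?bigdprod_sub.
Qed.

Lemma bigprod_sub_meet i : (\prod_j B j)%G :&: N i = B i.
Proof.
apply/eqP; rewrite eqEsubset subsetI sBN andbT; apply/andP; split; last first.
  by rewrite bigprodGE sub_gen // (bigcup_max i).
apply/subsetP=> z /setIP[]; rewrite defA => /prodsgP[e Be ->] Nz.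
have Ne j : e j \in N j by apply: (subsetP (sBN j)); apply: Be.
have Nz' j : (if j == i then \prod_j e j else 1) \in N j.
  by case: eqP => [->|]; rewrite ?group1.
have := bigdprod_prod_inj Ne Nz'; rewrite -big_mkcond big_pred1_eq => /(_ erefl i).
by rewrite eqxx => <-; apply: Be.
Qed.

Lemma bigprod_sub_sol : (forall i, solvable (B i)) -> solvable (\prod_i B i)%G.
Proof. by move=> solB; apply: bigcprod_sol bigprod_sub_cprod _. Qed.

Lemma bigprod_sub_normalizer :
  (forall i, 'N_(N i)(B i) = B i) -> 'N_G((\prod_i B i)%G) = (\prod_i B i)%G.
Proof.
move=> nBN; apply/eqP; rewrite eqEsubset subsetI bigprod_sub_subG normG !andbT.
apply/subsetP=> g /setIP[]; rewrite -{1}(bigdprodW defG).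
case/prodsgP=> c /(_ _ isT) Nc ->{g} nAc.
rewrite defA mem_prodg // => i _.
rewrite -(nBN i) inE Nc; apply/normP; rewrite -(bigprod_sub_meet i).
apply/eqP; rewrite eqEcard cardJg leqnn andbT.
apply/subsetP=> _ /imsetP[w /setIP[Aw Nw] ->].
rewrite -(bigdprod_conj Nc Nw) inE !memJ_norm ?Aw ?Nw //.
by apply: (subsetP (normal_norm (bigdprod_normal i))); rewrite -(bigdprodW defG) mem_prodg.
Qed.

Lemma bigprod_sub_conj_factor n (u : I -> 'I_n -> gT) :
    (forall i k, u i k \in N i) -> (forall i, N i :=: \prod_(k < n) B i :^ u i k) ->
  G :=: \prod_(k < n) (\prod_i B i)%G :^ \prod_i u i k.
Proof.
move=> Nu defN; have Gu k : \prod_i u i k \in G.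
  by rewrite -(bigdprodW defG) mem_prodg.
apply/eqP; rewrite eqEsubset; apply/andP; split; last first.
  apply/subsetP=> _ /prodsgP[z Az ->]; apply: group_prod => k _.
  by apply: (subsetP (conj_subG (Gu k) bigprod_sub_subG)); apply: Az.
apply/subsetP=> g; rewrite -{1}(bigdprodW defG) => /prodsgP[c /(_ _ isT) Nc ->{g}].
have /fin_all_exists[d Bd] i : exists d : 'I_n -> gT,
    (forall k, d k \in B i :^ u i k) /\ c i = \prod_(k < n) d k.
  by move: (Nc i); rewrite defN => /prodsgP[d Bd ->]; exists d; split=> // k; apply: Bd.
have Nd i k : d i k \in N i.
  have [/(_ k) Bdk _] := Bd i.
  by apply: subsetP Bdk; rewrite conj_subG ?sBN.
rewrite (eq_bigr _ (fun i _ => proj2 (Bd i))) bigdprod_prod_exchange //.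
apply: mem_prodg => k _.
have dJ i : d i k = (d i k ^ (u i k)^-1) ^ \prod_j u j k.
  by rewrite (bigdprod_conj (fun j => Nu j k) (groupJ (Nd i k) (groupVr (Nu i k)))) conjgKV.
rewrite (eq_bigr _ (fun i _ => dJ i)) -conjg_prod memJ_conjg defA mem_prodg // => i _.
by rewrite -mem_conjg; have [] := Bd i.
Qed.

Lemma bigprod_sub_morphim (f : {morphism G >-> gT}) (s : I -> I) (h : I -> gT) :
    injective s -> (forall i, h i \in N (s i)) ->
    (forall i, f @* B i = B (s i) :^ h i) ->
  exists2 g, g \in G & f @* (\prod_i B i)%G = (\prod_i B i)%G :^ g.
Proof.
move=> inj_s Nh fB; have [s' sK s'K] := injF_bij inj_s.
have Nh' j : h (s' j) \in N j by rewrite -{2}[j]s'K.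
exists (\prod_j h (s' j)); first by rewrite -(bigdprodW defG) mem_prodg.
rewrite bigprodGE morphim_gen; last first.
  by apply/bigcupsP=> i _; rewrite (subset_trans (sBN i)) ?bigdprod_sub.
rewrite -genJ -bigcupJ (big_morph _ (morphimU f) (morphim0 f)).
rewrite [in RHS](reindex_inj inj_s); congr <<_>>; apply: eq_bigr => i _.
rewrite fB; apply: eq_in_imset => w Bw /=.
by rewrite (bigdprod_conj Nh' (subsetP (sBN _) _ Bw)) sK.
Qed.

End SubProduct.

Lemma bigdprod_inj : (forall i, N i :!=: 1) -> forall i j, N i :=: N j -> i = j.
Proof.
move=> ntN i j eqN; apply/eqP; apply: contraNT (ntN i) => /bigdprod_TI.
by rewrite -eqN setIid => ->.
Qed.

End BigDprod.

Section Assembly.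

Variables (gT : finGroupType) (I X : finType) (rT : I -> finGroupType).
Variables (T : forall i, {group rT i}) (tg : X -> I).
Variables (N : X -> {group gT}) (G : {group gT}).
Hypothesis defG : \big[dprod/1]_x N x = G.
Hypothesis simT : forall i, simple (T i).
Hypothesis nabT : forall i, ~~ abelian (T i).
Hypothesis nisoT : forall i j, i != j -> ~~ (T i \isog T j).

Variable psi : forall x, {morphism T (tg x) >-> gT}.
Hypothesis inj_psi : forall x, 'injm (psi x).
Hypothesis im_psi : forall x, psi x @* T (tg x) = N x.

Variables (n : nat) (B : forall i, {group rT i}) (t : forall i, 'I_n -> rT i).
Hypothesis specB : forall i, special_solvable (T i) (B i).
Hypothesis factB : forall i, conj_factorization (T i) (B i) (t i).

Let sBT i : B i \subset T i. Proof. by case: (specB i). Qed.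

Let Bx x := (psi x @* B (tg x))%G.

Let sBxN x : Bx x \subset N x.
Proof. by rewrite /Bx /= -im_psi morphimS ?sBT. Qed.

Let isoN x : T (tg x) \isog N x.
Proof. by rewrite -im_psi sub_isog. Qed.

Let simN x : simple (N x). Proof. by rewrite -(isog_simple (isoN x)) simT. Qed.

Let Bx_aut_conj (f : {morphism G >-> gT}) x :
    'injm f -> f @* G = G ->
  exists y, f @* N x = N y /\ exists2 h, h \in N y & f @* Bx x = Bx y :^ h.
Proof.
move=> injf imfG.
have nabN z : ~~ abelian (N z) by rewrite -(isog_abelian (isoN z)) nabT.
have [y fNx] := bigdprod_morphim_simple_factor defG injf imfG simN (nabN x).
exists y; split=> //.
have isoNxy : N x \isog N y by rewrite -fNx sub_isog ?(bigdprod_sub defG).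
have tg_xy : tg x = tg y.
  apply: contraTeq (@nisoT _ _) _.
  exact: isog_trans (isog_trans (isoN x) isoNxy) (isog_symr (isoN y)).
have sTxG : psi x @* T (tg x) \subset G by rewrite im_psi (bigdprod_sub defG).
rewrite /Bx /= -(im_psi y) -(im_psi x) in fNx *.
move: (psi y) (inj_psi y) fNx; rewrite -tg_xy => phi inj_phi fTx.
have [_ _ _ stabB] := specB (tg x).
exact: morphim_aut_conj_stable (sBT _) stabB (inj_psi x) inj_phi injf sTxG fTx.
Qed.

Let Bx_aut : aut_conj_stable G (\prod_x Bx x)%G.
Proof.
move=> a AutGa; set f := autm AutGa.
have [injf imfG] : 'injm f /\ f @* G = G by rewrite injm_autm im_autm.
have /fin_all_exists[s fBx] := fun x => Bx_aut_conj x injf imfG.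
have /fin_all_exists2[h Nh fBxh] x : exists2 h, h \in N (s x) & f @* Bx x = Bx (s x) :^ h.
  by have [_] := fBx x.
have inj_s : injective s.
  move=> x1 x2 eq_s; apply: (bigdprod_inj defG) => [z | ].
    by case/simpleP: (simN z).
  apply: (injm_morphim_inj injf); rewrite ?(bigdprod_sub defG) //.
  by rewrite (proj1 (fBx x1)) (proj1 (fBx x2)) eq_s.
have [g Gg fA] := bigprod_sub_morphim defG sBxN inj_s Nh fBxh.
by exists g; rewrite // -fA morphimEsub ?(bigprod_sub_subG defG sBxN).
Qed.

Lemma bigdprod_has_sscp_fact : has_sscp_fact G n.
Proof.
apply/has_sscp_factP; exists (\prod_x Bx x)%G.
  split; [exact: (bigprod_sub_subG (B := Bx) defG sBxN) | | | exact: Bx_aut].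
    apply: (bigprod_sub_sol (B := Bx) defG sBxN) => x.
    by rewrite /Bx /= injm_sol ?sBT //; case: (specB (tg x)).
  apply: (bigprod_sub_normalizer (B := Bx) defG sBxN) => x.
  by rewrite /Bx /= -im_psi -injm_subnorm ?sBT //; case: (specB (tg x)) => _ _ ->.
have Npsi x k : psi x (t (tg x) k) \in N x.
  by rewrite -im_psi mem_morphim //; case: (factB (tg x)).
exists (fun k => \prod_x psi x (t (tg x) k)); split.
  by move=> k; rewrite -(bigdprodW defG) mem_prodg.
apply: (bigprod_sub_conj_factor (B := Bx) defG sBxN) => // x.
have [Tt defT] := factB (tg x).
rewrite -im_psi [X in _ @* X]defT morphim_bigprod => [|k]; last by rewrite conj_subG ?sBT ?Tt.
by apply: eq_bigr => k _; rewrite morphimJ.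
Qed.

End Assembly.

Theorem lemma13 (gT : finGroupType) (G : {group gT}) (m : nat)
    (r : 'I_m -> nat) (gTs : 'I_m -> finGroupType)
    (T : forall i : 'I_m, {group gTs i})
    (N : {i : 'I_m & 'I_(r i)} -> {group gT}) (gam : 'I_m -> nat) :
  0 < m ->
  (forall i, 0 < r i) ->
  (forall i, simple (T i)) ->
  (forall i, ~~ abelian (T i)) ->
  (forall i j, i != j -> ~~ (T i \isog T j)) ->
  (forall x, N x \isog T (tag x)) ->
  \big[dprod/1]_(x : {i : 'I_m & 'I_(r i)}) N x = G ->
  (forall i, is_gamma_sscp (T i) (gam i)) ->
  exists2 n, is_gamma_sscp G n & n <= \max_(i < m) gam i.
Proof.
move=> _ _ simT nabT nisoT isoN defG gamT; set M := \max_(i < m) gam i.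
suff /exists_minimal[n gamGn leM] : has_sscp_fact G M by exists n.
have /fin_all_exists[psi psiP] x : exists psi : {morphism T (tag x) >-> gT},
    'injm psi /\ psi @* T (tag x) = N x.
  by have [f injf imf] := isogP (isog_symr (isoN x)); exists f.
have /fin_all_exists2[B specB factB] i : exists2 B : {group gTs i},
    special_solvable (T i) B & exists t : 'I_M -> gTs i, conj_factorization (T i) B t.
  exact/has_sscp_factP/(has_sscp_fact_leq (leq_bigmax i))/(proj1 (gamT i)).
have /fin_all_exists[t factBt] := factB.
exact: (bigdprod_has_sscp_fact defG simT nabT nisoT
  (fun x => proj1 (psiP x)) (fun x => proj2 (psiP x)) specB factBt).
Qed.
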